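(* Let $G$ be any graph of order $n$ and let $H$ be any graph with a root vertex $v$. Then $$\rho(G\circ_v H)=\begin{cases}\rho(G)+n(\rho(H)-1), & \text{if } v\in P_H \text{ for every maximum packing } P_H \text{ of } H,\\ n\rho(H), & \text{if } v\notin P_H \text{ for some maximum packing } P_H \text{ of } H.\end{cases}$$
   Context: All graphs are finite and simple. A packing of $G$ is a set $P\subseteq V(G)$ with $N[u]\cap N[v]=\emptyset$ for all distinct $u,v\in P$ ($N[\cdot]$ the closed neighborhood); $\rho(G)$ is the maximum size of a packing. Given $G$ with $V(G)=\{g_1,\dots,g_n\}$ and a graph $H$ with root $v\in V(H)$, the rooted product $G\circ_v H$ has vertex set $V(G)\times V(H)$ and edge set $\bigcup_{i=1}^n\{(g_i,h)(g_i,h'): hh'\in E(H)\}\cup\{(g_i,v)(g_j,v): g_ig_j\in E(G)\}$ (i.e., a copy of $H$ is attached to each vertex of $G$ by identifying its root with that vertex). *)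

From mathcomp Require Import all_boot.
Set Implicit Arguments. Unset Strict Implicit. Unset Printing Implicit Defensive.

Definition simple_graph (T : finType) (e : rel T) : Prop :=
  symmetric e /\ irreflexive e.

Definition cnbhd (T : finType) (e : rel T) (u : T) : {set T} :=
  [set w | (w == u) || e u w].

Definition packing (T : finType) (e : rel T) (P : {set T}) : bool :=
  [forall u in P, forall w in P, (u != w) ==> [disjoint cnbhd e u & cnbhd e w]].

Definition rho (T : finType) (e : rel T) : nat :=
  \max_(P : {set T} | packing e P) #|P|.

Definition max_packing (T : finType) (e : rel T) (P : {set T}) : bool :=
  packing e P && (#|P| == rho e).

Definition rooted_prod (TG TH : finType) (eG : rel TG) (eH : rel TH) (v : TH)
  : rel (TG * TH) :=
  fun x y => ((x.1 == y.1) && eH x.2 y.2)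
             || [&& x.2 == v, y.2 == v & eG x.1 y.1].

From mathcomp Require Import all_boot zify.
Set Implicit Arguments. Unset Strict Implicit. Unset Printing Implicit Defensive.

(* Cut a set P of vertices of G o_v H into its fibres
   P_g = {h | (g,h) in P}, one per vertex g of G.  Every fibre of a packing
   is a packing of H, and the set of g with (g,v) in P is a packing of G.
   Hence rho(G o_v H) <= n rho(H) always; and if every maximum packing of
   H contains v, a fibre avoiding v has at most rho(H) - 1 elements, which
   gives rho(G o_v H) <= rho(G) + n (rho(H) - 1).
   Conversely, from packings P_G of G and P_H of H we build the packing
   {(g,h) | h in P_H, and g in P_G if h = v} of G o_v H; it has
   |P_G| + n (|P_H| - 1) elements if v in P_H and n |P_H| otherwise.
   Choosing maximum packings (with v not in P_H in the second case) gives
   the matching lower bounds.  The argument never uses that the edge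
   relations are symmetric or irreflexive. *)

Section Packings.

Variables (T : finType) (e : rel T).

Lemma packingP (P : {set T}) :
  reflect (forall u w x, u \in P -> w \in P ->
             x \in cnbhd e u -> x \in cnbhd e w -> u = w)
          (packing e P).
Proof.
apply: (iffP forall_inP) => [hP u w x uP wP xu xw | hP u uP].
- apply/eqP; apply: contraTT isT => uw.
  have /forall_inP/(_ w wP) := hP u uP.
  by rewrite uw /= => /disjointFr /(_ xu); rewrite xw.
- apply/forall_inP => w wP; apply/implyP => uw.
  rewrite disjoint_subset; apply/subsetP => x xu; rewrite inE.
  by apply/negP => xw; move/eqP: uw; apply; apply: hP xu xw.
Qed.

Lemma packing_set1 (u : T) : packing e [set u].
Proof. by apply/packingP => w w' x; rewrite !inE => /eqP -> /eqP ->. Qed.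

Lemma packing_set0 : packing e set0.
Proof. by apply/packingP => u w x; rewrite in_set0. Qed.

Lemma rho_max (P : {set T}) : packing e P -> #|P| <= rho e.
Proof. exact: (@leq_bigmax_cond _ (fun P => packing e P) (fun P : {set T} => #|P|)). Qed.

Lemma rho_le (k : nat) : (forall P, packing e P -> #|P| <= k) -> rho e <= k.
Proof. by move=> hk; apply/bigmax_leqP. Qed.

Lemma rho_attained : exists2 P, packing e P & #|P| = rho e.
Proof.
have ne : 0 < #|[pred P : {set T} | packing e P]|.
  by apply/card_gt0P; exists set0; apply: packing_set0.
by have [P hP hm] := eq_bigmax_cond (fun P : {set T} => #|P|) ne; exists P => //; rewrite /rho hm.
Qed.

Lemma rho_gt0 (u : T) : 0 < rho e.
Proof. by have := rho_max (packing_set1 u); rewrite cards1. Qed.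

End Packings.

Lemma sum_indicator (T : finType) (A : {set T}) : \sum_x (x \in A) = #|A|.
Proof. by rewrite -sum1_card [RHS]big_mkcond /=; apply: eq_bigr => x _; case: (x \in A). Qed.

Section RootedProduct.

Variables (TG TH : finType) (eG : rel TG) (eH : rel TH) (v : TH).

Local Notation E := (rooted_prod eG eH v).

Lemma cnbhd_rooted (g a : TG) (h b : TH) :
  ((a, b) \in cnbhd E (g, h)) =
  ((a == g) && (b \in cnbhd eH h)) || [&& h == v, b == v & eG g a].
Proof.
rewrite !inE /rooted_prod /= xpair_eqE (eq_sym g a).
by case: (a == g) => //=; rewrite orbA.
Qed.

Lemma cnbhd_fibre (g : TG) (h b : TH) :
  b \in cnbhd eH h -> (g, b) \in cnbhd E (g, h).
Proof. by move=> bh; rewrite cnbhd_rooted eqxx bh. Qed.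

Lemma cnbhd_root_layer (g a : TG) :
  ((a, v) \in cnbhd E (g, v)) = (a \in cnbhd eG g).
Proof. by rewrite cnbhd_rooted !inE !eqxx andbT. Qed.

Lemma cnbhd_root_proj (g a : TG) (b : TH) :
  (a, b) \in cnbhd E (g, v) -> a \in cnbhd eG g /\ b \in cnbhd eH v.
Proof.
rewrite cnbhd_rooted !inE => /orP [/andP [-> ->] // | /and3P [_ /eqP -> ->]].
by rewrite eqxx orbT.
Qed.

Lemma cnbhd_nonroot (g a : TG) (h b : TH) :
  h != v -> (a, b) \in cnbhd E (g, h) -> a = g /\ b \in cnbhd eH h.
Proof. by move/negbTE=> hv; rewrite cnbhd_rooted hv /= orbF => /andP [/eqP]. Qed.

Definition fibre (P : {set TG * TH}) (g : TG) : {set TH} := [set h | (g, h) \in P].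

Lemma card_fibres (P : {set TG * TH}) : #|P| = \sum_g #|fibre P g|.
Proof.
rewrite -sum1_card big_mkcond /=.
rewrite [RHS](eq_bigr (fun g => \sum_h (if (g, h) \in P then 1 else 0))).
  by rewrite pair_big /=; apply: eq_bigr => [[g h]] _.
move=> g _; rewrite -sum1_card big_mkcond /=.
by apply: eq_bigr => h _; rewrite inE.
Qed.

Lemma fibre_packing (P : {set TG * TH}) (g : TG) :
  packing E P -> packing eH (fibre P g).
Proof.
move/packingP=> hP; apply/packingP => u w x; rewrite [u \in _]inE [w \in _]inE => uP wP xu xw.
by case: (hP (g, u) (g, w) (g, x) uP wP (cnbhd_fibre g xu) (cnbhd_fibre g xw)).
Qed.

Lemma roots_packing (P : {set TG * TH}) :
  packing E P -> packing eG [set g | (g, v) \in P].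
Proof.
move/packingP=> hP; apply/packingP => g g' a; rewrite [g \in _]inE [g' \in _]inE => gP g'P ag ag'.
by have := hP (g, v) (g', v) (a, v) gP g'P; rewrite !cnbhd_root_layer => /(_ ag ag') [].
Qed.

(* Upper bound valid for every root: each fibre has at most rho(H) vertices. *)
Lemma rho_rooted_le : rho E <= #|TG| * rho eH.
Proof.
apply: rho_le => P hP; rewrite card_fibres -sum_nat_const.
by apply: leq_sum => g _; apply/rho_max/fibre_packing.
Qed.

Definition lift (PG : {set TG}) (PH : {set TH}) : {set TG * TH} :=
  [set x | (x.2 \in PH) && ((x.2 != v) || (x.1 \in PG))].

Lemma lift_packing (PG : {set TG}) (PH : {set TH}) :
  packing eG PG -> packing eH PH -> packing E (lift PG PH).
Proof.
move/packingP=> hG /packingP hH; apply/packingP => [[g h] [g' h'] [a b]].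
rewrite [(g, h) \in _]inE [(g', h') \in _]inE /= => /andP [hP gP] /andP [hP' gP'].
have apart g0 g1 h1 : v \in PH -> h1 != v -> h1 \in PH ->
    (a, b) \in cnbhd E (g0, v) -> (a, b) \in cnbhd E (g1, h1) -> False.
  move=> vP h1v h1P /cnbhd_root_proj [_ bv] /(cnbhd_nonroot h1v) [_ bh1].
  by move: h1v; rewrite (hH v h1 b vP h1P bv bh1) eqxx.
case: (eqVneq h v) => [eh | hv]; case: (eqVneq h' v) => [eh' | hv']; subst.
- rewrite eqxx /= in gP gP' => xu xw.
  have [ag _] := cnbhd_root_proj xu; have [ag' _] := cnbhd_root_proj xw.
  by rewrite (hG g g' a gP gP' ag ag').
- by move=> xu xw; case: (apart g g' h' hP hv' hP' xu xw).
- by move=> xu xw; case: (apart g' g h hP' hv hP xw xu).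
- move=> /(cnbhd_nonroot hv) [ag bh] /(cnbhd_nonroot hv') [ag' bh'].
  by rewrite -ag -ag' (hH h h' b hP hP' bh bh').
Qed.

(* Each fibre of the lift is PH, minus the root outside PG. *)
Lemma card_lift (PG : {set TG}) (PH : {set TH}) :
  #|lift PG PH| = #|PG| * (v \in PH) + #|TG| * #|PH :\ v|.
Proof.
have fib g : #|fibre (lift PG PH) g| = (g \in PG) * (v \in PH) + #|PH :\ v|.
  have -> : fibre (lift PG PH) g = if g \in PG then PH else PH :\ v.
    by apply/setP => h; case gP: (g \in PG); rewrite !inE /= gP ?orbT ?orbF ?andbT // andbC.
  by case: (g \in PG); rewrite ?mul1n ?(cardsD1 v PH).
rewrite card_fibres (eq_bigr _ (fun g _ => fib g)) big_split /= sum_nat_const.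
by rewrite -big_distrl /= sum_indicator.
Qed.

Hypothesis root_in_max : forall P : {set TH}, max_packing eH P -> v \in P.

(* If v lies in every maximum packing of H, a fibre avoiding v is not
   maximum, so it loses one vertex compared to rho(H). *)
Lemma fibre_le (P : {set TG * TH}) (g : TG) :
  packing E P -> #|fibre P g| <= ((g, v) \in P) + (rho eH - 1).
Proof.
move=> hP; have hF := fibre_packing g hP; have le := rho_max hF.
have pos := rho_gt0 eH v.
case: (boolP ((g, v) \in P)) => gv; first by lia.
have : #|fibre P g| != rho eH.
  apply: contraNneq gv => full.
  by have := @root_in_max (fibre P g); rewrite /max_packing hF full eqxx inE => ->.
by lia.
Qed.

(* Summing the fibre bound: the root copies in P form a packing of G. *)
Lemma rho_rooted_le_root : rho E <= rho eG + #|TG| * (rho eH - 1).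
Proof.
apply: rho_le => P hP; rewrite card_fibres.
apply: (@leq_trans (\sum_g (((g, v) \in P) + (rho eH - 1)))).
  by apply: leq_sum => g _; apply: fibre_le.
rewrite big_split /= sum_nat_const leq_add2r.
apply: leq_trans (rho_max (roots_packing hP)).
by rewrite -sum_indicator; apply: leq_sum => g _; rewrite inE.
Qed.

End RootedProduct.

Theorem mainTheorem15 (TG TH : finType) (eG : rel TG) (eH : rel TH) (v : TH)
  (hG : simple_graph eG) (hH : simple_graph eH) :
  ((forall P : {set TH}, max_packing eH P -> v \in P) ->
     rho (rooted_prod eG eH v) = rho eG + #|TG| * (rho eH - 1)) /\
  ((exists P : {set TH}, max_packing eH P /\ v \notin P) ->
     rho (rooted_prod eG eH v) = #|TG| * rho eH).
Proof.
have [PG hPG cPG] := rho_attained eG.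
split => [root_in_max | [PH [/andP [hPH /eqP cPH] vPH]]]; apply/eqP.
- rewrite eqn_leq rho_rooted_le_root //=.
  have [PH hPH cPH] := rho_attained eH.
  have vPH : v \in PH by apply: root_in_max; rewrite /max_packing hPH cPH eqxx.
  have := rho_max (lift_packing v hPG hPH).
  by rewrite card_lift vPH muln1 cPG -cPH (cardsD1 v PH) vPH add1n subn1.
- rewrite eqn_leq rho_rooted_le /=.
  have := rho_max (lift_packing v (packing_set0 eG) hPH).
  by rewrite card_lift (negbTE vPH) muln0 -cPH (cardsD1 v PH) (negbTE vPH).
Qed.
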